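(* Run the mechanism BFM-SWM described in the context with arbitrary $B>0$, $\alpha>1$, $\beta>1$, $\epsilon>0$, $\ell\in\{1,2\}$, with all sellers behaving truthfully. Then for every $i\in[\ell]$, $t\in[M]$, and every $A\in\{S_{i,t}\}\cup\{u^*\}$, $$v(A)\ \le\ \frac{v(A)-p(A)}{1-1/\beta}\ \le\ \frac{v(A)-c(A)}{1-1/\beta}.$$
   Context: Setting. $\mathcal{N}$ is a finite set of $n$ sellers. The valuation $v:2^{\mathcal{N}}\to\mathbb{R}_{\ge 0}$ satisfies $v(\emptyset)=0$ and is submodular (for $X\subseteq Y\subseteq\mathcal{N}$ and $u\notin Y$, $v(u\mid Y)\le v(u\mid X)$), not necessarily monotone, where $v(S\mid T)=v(S\cup T)-v(T)$, $v(u\mid T)=v(\{u\}\mid T)$. Each seller $u$ has a private cost $c(u)\ge 0$; $c(X)=\sum_{u\in X}c(u)$. $B>0$ is the budget, $[\ell]=\{1,\dots,\ell\}$. Sellers behave truthfully: a seller $u$ offered price $q$ accepts iff $c(u)\le q$. Mechanism BFM-SWM (inputs $B$, $\alpha>1$, $\beta>1$, $\epsilon>0$, $\ell\in\{1,2\}$): 1. Offer every seller the price $B$; let $R$ be the set of sellers who accept, and set $p(u)=B$ for $u\in R$. 2. Set $t=0$, $\rho_0=\epsilon/\alpha$, $u^*=\emptyset$ ($u^*$ is a set of at most one seller), and $S_{i,0}=\emptyset$ for $i\in[\ell]$. 3. Repeat rounds: set $t\leftarrow t+1$, $\rho_t=\alpha\rho_{t-1}$, $S_{i,t}=\emptyset$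 for all $i\in[\ell]$. Process the sellers $u\in R\setminus(\bigcup_{i=1}^{\ell}S_{i,t-1}\cup u^* )$ one at a time in a fixed order. For each such $u$: pick $j\in\arg\max_{i\in[\ell]}v(u\mid S_{i,t})$ (current contents); update $p(u)\leftarrow\min\{p(u),\ v(u\mid S_{j,t})/(\beta+\rho_t/B)\}$ and offer $p(u)$ to $u$. If $u$ accepts: if $v(S_{j,t}\cup\{u\})-p(S_{j,t}\cup\{u\})>\rho_t$ (current prices, $p(X)=\sum_{w\in X}p(w)$), set $u^*\leftarrow\{u\}$ and end the round immediately; otherwise add $u$ to $S_{j,t}$. If $u$ rejects, remove $u$ from $R$. After the round, stop if $R\setminus\left(\bigcup_{i=1}^{\ell}(S_{i,t-1}\cup S_{i,t})\cup u^*\right)=\emptyset$; otherwise start another round. 4. Let $M$ be the final value of $t$. Output $S^*\in\arg\max_{A\in\{S_{i,t}: i\in[\ell],\ t\in\{M-1,M\}\}\cup\{u^*\}}\big(v(A)-p(A)\big)$, paying each $u\in S^*$ its current price $p(u)$. Notation: $S_{i,t}$ denotes the contents of that candidate set at the end of round $t$, and $u^*$ its value at termination. For $A=S_{i,t}$, $p(A)=\sum_{u\in A}p(u)$ where $p(u)$ is the price $u$ accepted when it was added to $S_{i,t}$; for $A=u^*$, $p(u^* )$ is the price its member accepted when $u^*$ was last set. *)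

From HB Require Import structures.
From mathcomp Require Import all_boot all_order all_algebra.
Set Implicit Arguments. Unset Strict Implicit. Unset Printing Implicit Defensive.
Import Order.TTheory GRing.Theory Num.Theory.
Local Open Scope ring_scope.

Section BFM.
Variables (T : finType) (R : realFieldType).

Definition marg (v : {set T} -> R) (u : T) (X : {set T}) : R :=
  v (X :|: [set u]) - v X.

Definition submodular (v : {set T} -> R) : Prop :=
  forall (X Y : {set T}) (u : T), X \subset Y -> u \notin Y ->
    marg v u Y <= marg v u X.

Definition csum (f : T -> R) (A : {set T}) : R := \sum_(w in A) f w.

(* the set u* (at most one seller), stored together with the price its
   member accepted when u* was last set *)
Definition oset (o : option (T * R)) : {set T} :=
  if o is Some (u, _) then [set u] else set0.
Definition oprice (o : option (T * R)) : R :=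
  if o is Some (_, q) then q else 0.

Record mstate := MState {
  remR : {set T};
  price : T -> R;
  cur : nat -> {set T};
  ustar : option (T * R);
  halted : bool
}.

Record istate := IState {
  iS : nat -> {set T};
  ip : T -> R;
  iR : {set T};
  istop : option (T * R)
}.

Variables (v : {set T} -> R) (c : T -> R) (B alpha beta eps : R) (ell : nat).
Variable ord : seq T.
(* tie-breaking rule for j in argmax_i v(u | S_{i,t}); depends on round t,
   the seller u and the current contents of the candidate sets *)
Variable sel : nat -> T -> (nat -> {set T}) -> nat.

Definition rho (t : nat) : R := eps / alpha * alpha ^+ t.

Definition upd_set (S : nat -> {set T}) (j : nat) (X : {set T}) :=
  fun i => if i == j then X else S i.
Definition upd_price (p : T -> R) (u : T) (q : R) :=
  fun w => if w == u then q else p w.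

Definition process (t : nat) (s : istate) (u : T) : istate :=
  if istop s is Some _ then s else
  let S := iS s in
  let j := sel t u S in
  let q := Num.min (ip s u) (marg v u (S j) / (beta + rho t / B)) in
  let p' := upd_price (ip s) u q in
  if c u <= q then
    if v (S j :|: [set u]) - csum p' (S j :|: [set u]) > rho t
    then IState S p' (iR s) (Some (u, q))
    else IState (upd_set S j (S j :|: [set u])) p' (iR s) None
  else IState S p' (iR s :\ u) None.

Definition round (t : nat) (s : mstate) : mstate :=
  let L := [seq u <- ord | (u \in remR s)
              && (u \notin \bigcup_(i < ell) cur s i)
              && (u \notin oset (ustar s))] in
  let r := foldl (process t) (IState (fun _ => set0) (price s) (remR s) None) L in
  let us := if istop r is Some x then Some x else ustar s in
  MState (iR r) (ip r) (iS r) us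
    ((iR r :\: ((\bigcup_(i < ell) (cur s i :|: iS r i)) :|: oset us)) == set0).

Definition init : mstate :=
  MState [set u | c u <= B] (fun _ => B) (fun _ => set0) None false.

(* run t = state at the end of round t (run 0 = after step 2);
   once halted, the state no longer changes *)
Fixpoint run (t : nat) : mstate :=
  match t with
  | 0 => init
  | t'.+1 => let s := run t' in if halted s then s else round t'.+1 s
  end.

End BFM.

From HB Require Import structures.
From mathcomp Require Import all_boot all_order all_algebra.
From mathcomp Require Import lra.
Set Implicit Arguments. Unset Strict Implicit. Unset Printing Implicit Defensive.
Import Order.TTheory GRing.Theory Num.Theory.
Local Open Scope ring_scope.

(* Every payment the mechanism makes satisfies c(A) <= p(A) <= v(A)/beta: the
   offered price never exceeds v(u | S)/beta, submodularity bounds v(u | S) by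
   v({u}), and summing the marginal prices along the insertions into S_{i,t}
   telescopes to v(S_{i,t})/beta.  The two inequalities of the theorem are
   rearrangements of p(A) <= v(A)/beta and c(A) <= p(A). *)

Lemma surplus_bounds (R : realFieldType) (b x p c : R) :
  1 < b -> p <= x / b -> c <= p ->
  x <= (x - p) / (1 - b^-1) /\ (x - p) / (1 - b^-1) <= (x - c) / (1 - b^-1).
Proof.
move=> b_gt1 px cp.
have k_gt0 : 0 < 1 - b^-1 by rewrite subr_gt0 invf_lt1 //; lra.
split; first by rewrite ler_pdivlMr // mulrBr mulr1; lra.
by rewrite ler_pM2r ?invr_gt0 //; lra.
Qed.

Lemma le_div_dropD (R : realFieldType) (b r m q : R) :
  0 < b -> 0 <= r -> 0 <= q -> q <= m / (b + r) -> q <= m / b.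
Proof.
move=> b_gt0 r_ge0 q_ge0; rewrite !ler_pdivlMr ?ltr_wpDr //; nra.
Qed.

Section PaymentInvariant.
Variables (T : finType) (R : realFieldType).
Variables (v : {set T} -> R) (c : T -> R) (B alpha beta eps : R) (ell : nat).
Variable ord : seq T.
Variable sel : nat -> T -> (nat -> {set T}) -> nat.
Hypotheses (v0 : v set0 = 0) (v_submod : submodular v)
  (c_ge0 : forall u, 0 <= c u) (B_gt0 : 0 < B) (alpha_ge0 : 0 <= alpha)
  (beta_gt0 : 0 < beta) (eps_ge0 : 0 <= eps) (ord_uniq : uniq ord).

Definition sound_payment (pA : R) (A : {set T}) :=
  pA <= v A / beta /\ csum c A <= pA.

Definition sound_state (s : istate T R) :=
  (forall i, sound_payment (csum (ip s) (iS s i)) (iS s i)) /\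
  sound_payment (oprice (istop s)) (oset (istop s)).

Lemma sound_payment0 : sound_payment 0 set0.
Proof. by rewrite /sound_payment /csum big_set0 v0 mul0r. Qed.

Lemma sound_state_empty (p : T -> R) (R0 : {set T}) :
  sound_state (IState (fun _ => set0) p R0 None).
Proof. by split=> [i|] /=; rewrite ?/csum ?big_set0; apply: sound_payment0. Qed.

Lemma sound_payment1 u q :
  c u <= q -> q <= v [set u] / beta -> sound_payment q [set u].
Proof. by rewrite /sound_payment /csum big_set1. Qed.

Lemma marg_le_v1 u (S : {set T}) : u \notin S -> marg v u S <= v [set u].
Proof.
by move=> uS; have := @v_submod set0 S u (sub0set S) uS; rewrite /marg set0U v0 subr0.
Qed.

Lemma csum_upd_price_notin (p : T -> R) u q (A : {set T}) :
  u \notin A -> csum (upd_price p u q) A = csum p A.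
Proof.
move=> uA; apply: eq_bigr => w wA; rewrite /upd_price.
by case: eqP => // wu; rewrite -wu wA in uA.
Qed.

Lemma sound_paymentU1 (p : T -> R) u q (A : {set T}) :
  u \notin A -> sound_payment (csum p A) A ->
  c u <= q -> q <= marg v u A / beta ->
  sound_payment (csum (upd_price p u q) (A :|: [set u])) (A :|: [set u]).
Proof.
move=> uA [pA cA] cq qm.
rewrite /sound_payment /csum setUC !big_setU1 //= -!/(csum _ _).
rewrite csum_upd_price_notin // /upd_price eqxx setUC.
have -> : v (A :|: [set u]) / beta = marg v u A / beta + v A / beta.
  by rewrite /marg mulrBl subrK.
split; lra.
Qed.

Lemma rho_div_ge0 t : 0 <= rho alpha eps t / B.
Proof. by rewrite /rho divr_ge0 ?mulr_ge0 ?invr_ge0 ?exprn_ge0 // ltW. Qed.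

Lemma process_sets t s u i :
  iS (process v c B alpha beta eps sel t s u) i \subset iS s i :|: [set u].
Proof.
rewrite /process; case: (istop s) => [x|]; first exact: subsetUl.
case: ifP => _; last exact: subsetUl.
case: ifP => _ /=; first exact: subsetUl.
by rewrite /upd_set; case: eqP => [->|_]; rewrite ?subxx ?subsetUl.
Qed.

Lemma process_sound t s u : sound_state s -> (forall i, u \notin iS s i) ->
  sound_state (process v c B alpha beta eps sel t s u).
Proof.
move=> s_ok u_fresh; rewrite /process.
case: s s_ok u_fresh => S p R0 [x|] // [/= sets_ok _] /= u_fresh.
set j := sel t u S; set q := Num.min _ _.
have prices_ok i : sound_payment (csum (upd_price p u q) (S i)) (S i).
  by rewrite csum_upd_price_notin //; apply: sets_ok.
case: ifP => [cq|_]; last by split; last exact: sound_payment0.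
have qm : q <= marg v u (S j) / beta.
  apply: (le_div_dropD beta_gt0 (rho_div_ge0 t)); first exact: le_trans cq.
  by rewrite /q ge_min lexx orbT.
case: ifP => _.
  split=> //=; apply: sound_payment1 => //.
  by apply: le_trans qm _; rewrite ler_pM2r ?invr_gt0 // marg_le_v1.
split=> [i|]; last exact: sound_payment0.
by rewrite /upd_set /=; case: eqP => _ //; apply: sound_paymentU1.
Qed.

Lemma foldl_process_sound t L s :
  uniq L -> sound_state s -> (forall x i, x \in L -> x \notin iS s i) ->
  sound_state (foldl (process v c B alpha beta eps sel t) s L).
Proof.
elim: L s => [|x L IH] s //= /andP[xL uL] s_ok L_fresh.
apply: IH => //; first by apply: process_sound => // i; apply: L_fresh; rewrite inE eqxx.
move=> y i yL; apply/negP => /(subsetP (process_sets t s x i)).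
rewrite in_setU (negbTE (L_fresh y i _)) ?inE ?yL ?orbT //=.
by move/eqP=> yx; rewrite -yx yL in xL.
Qed.

Lemma run_sound t : let s := run v c B alpha beta eps ell ord sel t in
  (forall i, sound_payment (csum (price s) (cur s i)) (cur s i)) /\
  sound_payment (oprice (ustar s)) (oset (ustar s)).
Proof.
elim: t => [|t IH] /=; first exact: (sound_state_empty (fun=> B) set0).
case: ifP => _ //; rewrite /round /=.
set r := foldl _ _ _.
have [sets_ok star_ok] : sound_state r.
  apply: foldl_process_sound; first exact: filter_uniq.
    exact: sound_state_empty.
  by move=> x i _; rewrite inE.
by split=> //; case: (istop r) star_ok => // _; case: IH.
Qed.

End PaymentInvariant.

Theorem lemma4p6 (T : finType) (R : realFieldType)
  (v : {set T} -> R) (c : T -> R) (B alpha beta eps : R) (ell : nat)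
  (ord : seq T) (sel : nat -> T -> (nat -> {set T}) -> nat) :
  v set0 = 0 ->
  (forall X, 0 <= v X) ->
  submodular v ->
  (forall u, 0 <= c u) ->
  0 < B -> 1 < alpha -> 1 < beta -> 0 < eps ->
  (ell == 1)%N || (ell == 2)%N ->
  perm_eq ord (enum T) ->
  (forall t u S, (sel t u S < ell)%N /\
     forall i, (i < ell)%N -> marg v u (S i) <= marg v u (S (sel t u S))) ->
  forall M : nat,
  halted (run v c B alpha beta eps ell ord sel M) ->
  (forall t, (t < M)%N -> ~~ halted (run v c B alpha beta eps ell ord sel t)) ->
  (forall i t, (i < ell)%N -> (1 <= t <= M)%N ->
     let s := run v c B alpha beta eps ell ord sel t in
     let A := cur s i in
     v A <= (v A - csum (price s) A) / (1 - beta^-1) /\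
     (v A - csum (price s) A) / (1 - beta^-1) <= (v A - csum c A) / (1 - beta^-1))
  /\
  (let us := ustar (run v c B alpha beta eps ell ord sel M) in
   let A := oset us in
   v A <= (v A - oprice us) / (1 - beta^-1) /\
   (v A - oprice us) / (1 - beta^-1) <= (v A - csum c A) / (1 - beta^-1)).
Proof.
move=> v0 _ v_submod c_ge0 B_gt0 alpha_gt1 beta_gt1 eps_gt0 _ ord_perm _ M _ _.
have ord_uniq : uniq ord by rewrite (perm_uniq ord_perm) enum_uniq.
have run_ok := run_sound ell sel v0 v_submod c_ge0 B_gt0
  (ltW (lt_trans ltr01 alpha_gt1)) (lt_trans ltr01 beta_gt1) (ltW eps_gt0) ord_uniq.
split=> [i t _ _ /=|/=].
  by have [/(_ i) [pA cA] _] := run_ok t; apply: surplus_bounds.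
by have [_ [pA cA]] := run_ok M; apply: surplus_bounds.
Qed.
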